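(* Every countably infinite line graph $G$ admits a majority $2$-vertex-coloring, i.e. there is a partition $V(G)=V_1\cup V_2$ such that for each $i\in\{1,2\}$ and each $v\in V_i$, $|N(v)\cap V_i|\le |N(v)\setminus V_i|$ (as cardinalities).
   Context: $N(v)$ denotes the set of neighbors of $v$ in $G$. A line graph is the line graph $L(H)$ of some graph $H$: its vertices are the edges of $H$, two being adjacent iff they share an endvertex. *)

From Stdlib Require Import Classical.

Definition simple_graph {V : Type} (adj : V -> V -> Prop) : Prop :=
  (forall u v, adj u v -> adj v u) /\ (forall v, ~ adj v v).

Definition countably_infinite (V : Type) : Prop :=
  exists f : nat -> V, (forall m n, f m = f n -> m = n) /\ (forall v, exists n, f n = v).

Definition nbhd {V : Type} (adj : V -> V -> Prop) (v : V) : V -> Prop := adj v.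

Definition card_le {V : Type} (A B : V -> Prop) : Prop :=
  exists f : {x | A x} -> {x | B x}, forall x y, f x = f y -> x = y.

Definition same_edge {W : Type} (e f : W * W) : Prop :=
  (fst e = fst f /\ snd e = snd f) \/ (fst e = snd f /\ snd e = fst f).

Definition share_end {W : Type} (e f : W * W) : Prop :=
  fst e = fst f \/ fst e = snd f \/ snd e = fst f \/ snd e = snd f.

(* adj is (isomorphic to) the line graph L(H) of some simple graph H = (W, adjH):
   [ends] is a bijection from V onto the edge set of H (edges as unordered pairs),
   and two distinct vertices are adjacent iff the corresponding edges share an
   endvertex. *)
Definition is_line_graph {V : Type} (adj : V -> V -> Prop) : Prop :=
  exists (W : Type) (adjH : W -> W -> Prop) (ends : V -> W * W),
    simple_graph adjH /\
    (forall v, adjH (fst (ends v)) (snd (ends v))) /\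
    (forall v w, same_edge (ends v) (ends w) -> v = w) /\
    (forall a b, adjH a b -> exists v, same_edge (ends v) (a, b)) /\
    (forall v w, adj v w <-> (v <> w /\ share_end (ends v) (ends w))).

(* Majority 2-vertex-colouring: partition V = V_1 ∪ V_2 given by c : V -> bool
   (V_1 = c^-1(true), V_2 = c^-1(false)); every v in V_i has
   |N(v) ∩ V_i| <= |N(v) \ V_i|. *)
Definition majority_2_colouring {V : Type} (adj : V -> V -> Prop) (c : V -> bool) : Prop :=
  forall v : V,
    card_le (fun w => nbhd adj v w /\ c w = c v)
            (fun w => nbhd adj v w /\ c w <> c v).

From Stdlib Require Import Classical ClassicalEpsilon ProofIrrelevance Lia Arith Wf_nat Cantor.

(* An
   edge with an endpoint x of infinite degree lies in the infinite clique of
   edges at x, so it is enough that x sees infinitely many edges of each colour.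
   We force this by pairing off, along an enumeration visiting every endpoint
   infinitely often, disjoint pairs of edges at x that must receive different
   colours.  An edge whose endpoints both have finite degree has finitely many
   neighbours, and it lies in no pair.  Among the colourings respecting the
   pairs, one minimising the number of monochromatic adjacent pairs below N is
   a majority colouring at every such edge below N: recolouring that edge keeps
   the pairs respected and changes the count by twice the difference between
   its opposite- and same-coloured neighbours.  A compactness argument on
   colourings of the naturals glues these finite solutions together. *)

Lemma sig_eq {X : Type} {P : X -> Prop} (u v : {x | P x}) :
  proj1_sig u = proj1_sig v -> u = v.
Proof. apply eq_sig_hprop; intros; apply proof_irrelevance. Qed.

Lemma card_le_of_map {X : Type} (P Q : X -> Prop) (h : X -> X) :
  (forall x, P x -> Q (h x)) ->
  (forall x y, P x -> P y -> h x = h y -> x = y) ->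
  card_le P Q.
Proof.
  intros HPQ Hinj.
  exists (fun x => exist Q (h (proj1_sig x)) (HPQ _ (proj2_sig x))).
  intros [x Px] [y Py] Exy; apply sig_eq; simpl.
  apply (f_equal (@proj1_sig _ _)) in Exy; simpl in Exy; auto.
Qed.

Lemma card_le_mono {X : Type} (P Q P' Q' : X -> Prop) :
  (forall x, P' x -> P x) -> (forall x, Q x -> Q' x) -> card_le P Q -> card_le P' Q'.
Proof.
  intros HP HQ [phi Hphi].
  exists (fun x => let y := phi (exist P _ (HP _ (proj2_sig x))) in
                   exist Q' (proj1_sig y) (HQ _ (proj2_sig y))).
  intros x x' Exx'; apply sig_eq.
  apply (f_equal (@proj1_sig _ _)) in Exx'; simpl in Exx'.
  apply sig_eq, Hphi, (f_equal (@proj1_sig _ _)) in Exx'; exact Exx'.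
Qed.

Lemma card_le_transport {X Y : Type} (f : X -> Y) (P Q : Y -> Prop) :
  (forall x x', f x = f x' -> x = x') -> (forall y, exists x, f x = y) ->
  card_le (fun x => P (f x)) (fun x => Q (f x)) -> card_le P Q.
Proof.
  intros finj fsurj [phi Hphi].
  destruct (choice _ fsurj) as [g Hg].
  assert (HP : forall y, P y -> P (f (g y))) by (intros y; rewrite Hg; auto).
  exists (fun y => let x := phi (exist _ (g (proj1_sig y)) (HP _ (proj2_sig y))) in
                   exist Q (f (proj1_sig x)) (proj2_sig x)).
  intros y y' Eyy'; apply sig_eq.
  apply (f_equal (@proj1_sig _ _)) in Eyy'; simpl in Eyy'.
  apply finj, sig_eq, Hphi, (f_equal (@proj1_sig _ _)), (f_equal f) in Eyy'; simpl in Eyy'.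
  rewrite !Hg in Eyy'; exact Eyy'.
Qed.

Lemma exists_min_measure {X : Type} (P : X -> Prop) (g : X -> nat) :
  (exists x, P x) -> exists x, P x /\ forall y, P y -> g x <= g y.
Proof.
  intros [x Px].
  destruct (dec_inh_nat_subset_has_unique_least_element (fun n => exists x, P x /\ g x = n))
    as [n [[[x0 [Px0 <-]] Hmin] _]]; [intros n; apply classic|eauto|].
  exists x0; split; auto.
  intros y Py; apply Hmin; eauto.
Qed.

Fixpoint sum (N : nat) (f : nat -> nat) : nat :=
  match N with 0 => 0 | S N' => sum N' f + f N' end.

Lemma sum_ext N f g : (forall i, i < N -> f i = g i) -> sum N f = sum N g.
Proof.
  induction N as [|N IH]; simpl; intros H; auto.
  rewrite IH, H; auto; intros; apply H; lia.
Qed.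

Lemma sum_plus N f g : sum N (fun i => f i + g i) = sum N f + sum N g.
Proof. induction N as [|N IH]; simpl; [|rewrite IH]; lia. Qed.

Lemma sum_le_mono N M f : N <= M -> sum N f <= sum M f.
Proof. induction 1; simpl; lia. Qed.

Lemma sum_ge_term N f n : n < N -> f n <= sum N f.
Proof. intros Hn; pose proof (sum_le_mono (S n) N f Hn); simpl in *; lia. Qed.

Lemma sum_split_at N f n : n < N ->
  sum N f = f n + sum N (fun i => if i =? n then 0 else f i).
Proof.
  induction N as [|N IH]; simpl; intros Hn; [lia|].
  destruct (Nat.eq_dec n N) as [->|Hne].
  - rewrite Nat.eqb_refl, (sum_ext N (fun i => if i =? N then 0 else f i) f); [lia|].
    intros i Hi; destruct (Nat.eqb_spec i N); [lia|auto].
  - rewrite IH by lia; destruct (Nat.eqb_spec N n); lia.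
Qed.

Lemma double_sum_split N n (f : nat -> nat -> nat) : n < N ->
  sum N (fun i => sum N (f i)) + f n n =
  sum N (f n) + sum N (fun i => f i n) +
  sum N (fun i => if i =? n then 0 else sum N (fun j => if j =? n then 0 else f i j)).
Proof.
  intros Hn.
  rewrite (sum_ext N _ (fun i => f i n + sum N (fun j => if j =? n then 0 else f i j)))
    by (intros; apply sum_split_at; auto).
  rewrite sum_plus, (sum_split_at N (fun i => sum N (fun j => _)) n Hn),
    (sum_split_at N (f n) n Hn).
  cbv beta; lia.
Qed.

Definition ind (P : Prop) : nat := if excluded_middle_informative P then 1 else 0.

Definition count (N : nat) (P : nat -> Prop) : nat := sum N (fun m => ind (P m)).

Lemma ind_iff (P Q : Prop) : (P <-> Q) -> ind P = ind Q.
Proof.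
  unfold ind; intros H.
  destruct (excluded_middle_informative P), (excluded_middle_informative Q); tauto.
Qed.

Lemma count_ext N (P Q : nat -> Prop) :
  (forall m, m < N -> (P m <-> Q m)) -> count N P = count N Q.
Proof. intros H; apply sum_ext; intros; apply ind_iff; auto. Qed.

Lemma count_lt N (P : nat -> Prop) m : P m -> m < N -> count m P < count N P.
Proof.
  intros Pm Hm; pose proof (sum_le_mono (S m) N (fun j => ind (P j)) Hm) as H.
  unfold count, ind in *; simpl in H.
  destruct (excluded_middle_informative (P m)); [lia|tauto].
Qed.

Lemma count_stable B N (P : nat -> Prop) :
  (forall m, P m -> m < B) -> B <= N -> count N P = count B P.
Proof.
  intros HB; induction 1 as [|N HBN IH]; auto.
  unfold count in *; simpl; rewrite IH.
  unfold ind; destruct (excluded_middle_informative (P N)) as [HN|]; [specialize (HB N HN)|]; lia.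
Qed.

Lemma count_rank N (Q : nat -> Prop) i : i < count N Q -> exists j, Q j /\ count j Q = i.
Proof.
  unfold count; induction N as [|N IH]; simpl; intros Hi; [lia|].
  destruct (le_lt_dec (sum N (fun j => ind (Q j))) i); auto.
  exists N; unfold ind in *; destruct (excluded_middle_informative (Q N)); split; auto; lia.
Qed.

Lemma count_inj (P : nat -> Prop) m m' : P m -> P m' -> count m P = count m' P -> m = m'.
Proof.
  intros Pm Pm' E; destruct (lt_eq_lt_dec m m') as [[Hlt|]|Hlt]; auto;
    [pose proof (count_lt m' P m Pm Hlt)|pose proof (count_lt m P m' Pm' Hlt)]; lia.
Qed.

(* An element of P is sent to the element of Q of the same rank. *)
Lemma card_le_of_count N (P Q : nat -> Prop) :
  (forall m, P m -> m < N) -> count N P <= count N Q -> card_le P Q.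
Proof.
  intros HP Hle.
  assert (Hrank : forall m, exists j, P m -> Q j /\ count j Q = count m P).
  { intros m; destruct (classic (P m)) as [Pm|]; [|exists 0; tauto].
    destruct (count_rank N Q (count m P)) as [j Hj]; eauto.
    pose proof (count_lt N P m Pm (HP m Pm)); lia. }
  destruct (choice _ Hrank) as [h Hh].
  apply (card_le_of_map P Q h); [intros m Pm; apply Hh, Pm|].
  intros m m' Pm Pm' E; apply (count_inj P); auto.
  destruct (Hh m Pm), (Hh m' Pm'); congruence.
Qed.

Definition unbounded (P : nat -> Prop) : Prop := forall N, exists m, N <= m /\ P m.

Lemma bounded_of_not_unbounded (P : nat -> Prop) :
  ~ unbounded P -> exists N, forall m, P m -> m < N.
Proof.
  intros HP; apply not_all_ex_not in HP as [N HN].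
  exists N; intros m Pm; destruct (le_lt_dec N m); auto.
  exfalso; apply HN; eauto.
Qed.

(* When [P] is bounded this is just some [m >= b]. *)
Definition next_above (P : nat -> Prop) (b : nat) : nat :=
  epsilon (inhabits b) (fun m => b <= m /\ (unbounded P -> P m)).

Lemma next_above_spec P b : b <= next_above P b /\ (unbounded P -> P (next_above P b)).
Proof.
  apply (epsilon_spec (inhabits b) (fun m => b <= m /\ (unbounded P -> P m))).
  destruct (classic (unbounded P)) as [HP|HP].
  - destruct (HP b) as [m Hm]; exists m; tauto.
  - exists b; split; [lia|tauto].
Qed.

Fixpoint pick_seq (Q : nat -> nat -> Prop) (k : nat) : nat :=
  next_above (Q k) (match k with 0 => 0 | S k' => S (pick_seq Q k') end).

Lemma pick_seq_spec Q k : unbounded (Q k) -> Q k (pick_seq Q k).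
Proof. destruct k; apply next_above_spec. Qed.

Lemma pick_seq_succ Q k : pick_seq Q k < pick_seq Q (S k).
Proof. apply next_above_spec. Qed.

Lemma pick_seq_lt Q k l : k < l -> pick_seq Q k < pick_seq Q l.
Proof.
  induction 1 as [|l _ IH]; [apply pick_seq_succ|].
  pose proof (pick_seq_succ Q l); lia.
Qed.

Lemma pick_seq_ge Q k : k <= pick_seq Q k.
Proof.
  induction k as [|k IH]; [lia|].
  pose proof (pick_seq_succ Q k); lia.
Qed.

Lemma pick_seq_inj Q k l : pick_seq Q k = pick_seq Q l -> k = l.
Proof.
  intros E; destruct (lt_eq_lt_dec k l) as [[Hlt|]|Hlt]; auto;
    pose proof (pick_seq_lt Q _ _ Hlt); lia.
Qed.

Lemma card_le_of_unbounded (P Q : nat -> Prop) : unbounded Q -> card_le P Q.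
Proof.
  intros HQ; apply (card_le_of_map P Q (pick_seq (fun _ => Q))).
  - intros m _; apply (pick_seq_spec (fun _ => Q)), HQ.
  - intros m m' _ _; apply pick_seq_inj.
Qed.

Section Compactness.

Variables (P : nat -> (nat -> bool) -> Prop) (b : nat -> nat).
Hypothesis P_local : forall k c c', (forall i, i < b k -> c i = c' i) -> P k c -> P k c'.
Hypothesis P_finitely_satisfiable : forall K, exists c, forall k, k < K -> P k c.

Definition extendable (n : nat) (s : nat -> bool) : Prop :=
  forall K, exists c, (forall i, i < n -> c i = s i) /\ forall k, k < K -> P k c.

Definition set_bit (s : nat -> bool) (n : nat) (x : bool) : nat -> bool :=
  fun i => if i =? n then x else s i.

Fixpoint extendable_prefix (n : nat) : nat -> bool :=
  match n with
  | 0 => fun _ => false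
  | S n' =>
      if excluded_middle_informative (extendable n (set_bit (extendable_prefix n') n' true))
      then set_bit (extendable_prefix n') n' true
      else set_bit (extendable_prefix n') n' false
  end.

Lemma extendable_prefix_spec n : extendable n (extendable_prefix n).
Proof.
  induction n as [|n IH]; simpl.
  - intros K; destruct (P_finitely_satisfiable K) as [c Hc].
    exists c; split; [lia|auto].
  - destruct (excluded_middle_informative _) as [|Htrue]; auto.
    apply not_all_ex_not in Htrue as [K1 HK1].
    intros K2; destruct (IH (max K1 K2)) as [c [Hagree Hc]].
    assert (Hset : forall x, c n = x -> forall i, i < S n -> c i = set_bit (extendable_prefix n) n x i).
    { intros x Hx i Hi; unfold set_bit; destruct (Nat.eqb_spec i n); [congruence|apply Hagree; lia]. }
    destruct (c n) eqn:Hcn.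
    + exfalso; apply HK1; exists c; split; [apply Hset; auto|intros; apply Hc; lia].
    + exists c; split; [apply Hset; auto|intros; apply Hc; lia].
Qed.

Lemma extendable_prefix_stable n m i : i < n -> n <= m -> extendable_prefix m i = extendable_prefix n i.
Proof.
  intros Hi; induction 1 as [|m Hnm IH]; auto; simpl.
  destruct (excluded_middle_informative _); unfold set_bit;
    destruct (Nat.eqb_spec i m); [lia|auto|lia|auto].
Qed.

Lemma bool_seq_compactness : exists c, forall k, P k c.
Proof.
  exists (fun i => extendable_prefix (S i) i); intros k.
  destruct (extendable_prefix_spec (b k) (S k)) as [c [Hagree Hc]].
  apply (P_local k c); [|apply Hc; lia].
  intros i Hi; rewrite Hagree by auto; apply extendable_prefix_stable; lia.
Qed.

End Compactness.

Section MonochromaticPotential.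

Variable A : nat -> nat -> Prop.
Hypothesis A_sym : forall n m, A n m -> A m n.
Hypothesis A_irrefl : forall n, ~ A n n.

Definition same (N : nat) (c : nat -> bool) (n : nat) : nat := count N (fun m => A n m /\ c m = c n).
Definition opp (N : nat) (c : nat -> bool) (n : nat) : nat := count N (fun m => A n m /\ c m <> c n).
Definition potential (N : nat) (c : nat -> bool) : nat := sum N (fun i => same N c i).

Definition flip (c : nat -> bool) (n : nat) : nat -> bool :=
  fun m => if m =? n then negb (c n) else c m.

Lemma potential_flip N c n : n < N ->
  potential N (flip c n) + 2 * same N c n = potential N c + 2 * opp N c n.
Proof.
  intros Hn; unfold potential, same, opp, count.
  set (mono (d : nat -> bool) i j := ind (A i j /\ d j = d i)).
  assert (Hsym : forall d, sum N (fun i => mono d i n) = sum N (mono d n)).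
  { intros d; apply sum_ext; intros i _; apply ind_iff.
    split; intros [Ha Hc]; split; auto. }
  assert (Hdiag : forall d, mono d n n = 0).
  { intros d; unfold mono, ind; destruct (excluded_middle_informative _) as [[Hnn _]|]; auto.
    destruct (A_irrefl n Hnn). }
  assert (Hrest : forall i, i < N ->
    (if i =? n then 0 else sum N (fun j => if j =? n then 0 else mono (flip c n) i j)) =
    (if i =? n then 0 else sum N (fun j => if j =? n then 0 else mono c i j))).
  { intros i _; destruct (Nat.eqb_spec i n) as [|Hi]; auto.
    apply sum_ext; intros j _; destruct (Nat.eqb_spec j n) as [|Hj]; auto.
    unfold mono, flip; apply Nat.eqb_neq in Hi, Hj; rewrite Hi, Hj; auto. }
  assert (Hrow : sum N (mono (flip c n) n) = sum N (fun m => ind (A n m /\ c m <> c n))).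
  { apply sum_ext; intros j _; apply ind_iff; unfold mono, flip; rewrite Nat.eqb_refl.
    destruct (Nat.eqb_spec j n) as [->|]; [pose proof (A_irrefl n); tauto|].
    destruct (c j), (c n); simpl; intuition congruence. }
  pose proof (double_sum_split N n (mono c) Hn) as Hc.
  pose proof (double_sum_split N n (mono (flip c n)) Hn) as Hfc.
  rewrite (sum_ext N _ _ Hrest), Hsym, Hdiag, Hrow in Hfc.
  rewrite Hsym, Hdiag in Hc.
  unfold mono in *; lia.
Qed.

End MonochromaticPotential.

Section LineGraph.

Variables (W : Type) (en : nat -> W * W).

Definition line_adj (n m : nat) : Prop := n <> m /\ share_end (en n) (en m).

Definition incident (x : W) (m : nat) : Prop := fst (en m) = x \/ snd (en m) = x.

Definition infinite_deg (x : W) : Prop := unbounded (incident x).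

Definition finite_deg_edge (n : nat) : Prop :=
  ~ infinite_deg (fst (en n)) /\ ~ infinite_deg (snd (en n)).

Lemma line_adj_sym n m : line_adj n m -> line_adj m n.
Proof. unfold line_adj, share_end; intuition. Qed.

Lemma line_adj_irrefl n : ~ line_adj n n.
Proof. unfold line_adj; tauto. Qed.

Lemma line_adj_of_incident n m x :
  n <> m -> (x = fst (en n) \/ x = snd (en n)) -> incident x m -> line_adj n m.
Proof. unfold line_adj, share_end, incident; intuition congruence. Qed.

Lemma line_adj_bounded n : finite_deg_edge n -> exists B, forall m, line_adj n m -> m < B.
Proof.
  intros [H1 H2].
  destruct (bounded_of_not_unbounded _ H1) as [B1 HB1], (bounded_of_not_unbounded _ H2) as [B2 HB2].
  exists (B1 + B2); intros m [_ Hs].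
  assert (Hm : incident (fst (en n)) m \/ incident (snd (en n)) m)
    by (unfold share_end, incident in *; intuition).
  destruct Hm as [Hm|Hm]; [specialize (HB1 m Hm)|specialize (HB2 m Hm)]; lia.
Qed.

Definition target (t : nat) : W :=
  let (e, s) := Cantor.of_nat t in if Nat.even s then fst (en e) else snd (en e).

Lemma target_recurrent n x N :
  x = fst (en n) \/ x = snd (en n) -> exists t, N <= t /\ target t = x.
Proof.
  intros Hx.
  assert (Hs : exists s, N <= s /\ x = if Nat.even s then fst (en n) else snd (en n)).
  { destruct Hx as [->| ->]; [exists (0 + 2 * N)|exists (1 + 2 * N)];
      rewrite Nat.even_add_mul_2; split; auto; lia. }
  destruct Hs as [s [Hs ->]].
  exists (Cantor.to_nat (n, s)); unfold target; rewrite Cantor.cancel_of_to; split; auto.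
  pose proof (Cantor.to_nat_non_decreasing n s); lia.
Qed.

(* Stage [t] pairs [sel (2 * t)] with [sel (2 * t + 1)]; as [sel] is increasing,
   the pairs are disjoint. *)
Definition sel : nat -> nat := pick_seq (fun k => incident (target (Nat.div2 k))).

Definition alternating (c : nat -> bool) : Prop :=
  forall t, infinite_deg (target t) -> c (sel (S (2 * t))) <> c (sel (2 * t)).

Lemma sel_incident k :
  infinite_deg (target (Nat.div2 k)) -> incident (target (Nat.div2 k)) (sel k).
Proof. apply (pick_seq_spec (fun k => incident (target (Nat.div2 k)))). Qed.

Lemma sel_pair_incident t : infinite_deg (target t) ->
  incident (target t) (sel (2 * t)) /\ incident (target t) (sel (S (2 * t))).
Proof.
  intros Ht; pose proof (sel_incident (2 * t)) as H0; pose proof (sel_incident (S (2 * t))) as H1.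
  rewrite Nat.div2_double in H0; rewrite Nat.div2_succ_double in H1; auto.
Qed.

Lemma alternating_exists : exists c, alternating c.
Proof.
  exists (fun m => if excluded_middle_informative (exists t, m = sel (S (2 * t))) then true else false).
  intros t _.
  destruct (excluded_middle_informative (exists s, sel (S (2 * t)) = sel (S (2 * s)))) as [_|H];
    [|exfalso; eauto].
  destruct (excluded_middle_informative (exists s, sel (2 * t) = sel (S (2 * s)))) as [[s Hs]|_];
    [|discriminate].
  apply pick_seq_inj in Hs; lia.
Qed.

Lemma sel_avoids_finite_deg_edge n k :
  finite_deg_edge n -> infinite_deg (target (Nat.div2 k)) -> sel k <> n.
Proof.
  intros [H1 H2] Hinf E.
  destruct (sel_incident k Hinf) as [Hx|Hx]; rewrite E in Hx; rewrite <- Hx in Hinf; tauto.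
Qed.

Lemma alternating_flip c n : finite_deg_edge n -> alternating c -> alternating (flip c n).
Proof.
  intros Hn Hc t Ht; unfold flip.
  pose proof (sel_avoids_finite_deg_edge n (2 * t) Hn) as H0.
  pose proof (sel_avoids_finite_deg_edge n (S (2 * t)) Hn) as H1.
  rewrite Nat.div2_double in H0; rewrite Nat.div2_succ_double in H1.
  destruct (Nat.eqb_spec (sel (S (2 * t))) n), (Nat.eqb_spec (sel (2 * t)) n);
    [tauto|tauto|tauto|auto].
Qed.

Lemma finite_majority N : exists c, alternating c /\
  forall n, n < N -> finite_deg_edge n -> same line_adj N c n <= opp line_adj N c n.
Proof.
  destruct (exists_min_measure alternating (potential line_adj N) alternating_exists)
    as [c [Hc Hmin]].
  exists c; split; auto; intros n Hn Hfin.
  pose proof (Hmin _ (alternating_flip c n Hfin Hc)).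
  pose proof (potential_flip line_adj line_adj_sym line_adj_irrefl N c n Hn); lia.
Qed.

Lemma opp_unbounded c n x : alternating c -> infinite_deg x ->
  x = fst (en n) \/ x = snd (en n) -> unbounded (fun m => line_adj n m /\ c m <> c n).
Proof.
  intros Hc Hx Hend N.
  destruct (target_recurrent n x (N + S n) Hend) as [t [Ht <-]].
  destruct (sel_pair_incident t Hx) as [H0 H1].
  pose proof (pick_seq_ge (fun k => incident (target (Nat.div2 k))) (2 * t)).
  pose proof (pick_seq_succ (fun k => incident (target (Nat.div2 k))) (2 * t)).
  fold sel in *.
  assert (Hadj : forall m, N + S n <= m -> incident (target t) m -> line_adj n m)
    by (intros m Hm; apply line_adj_of_incident; auto; lia).
  specialize (Hc t Hx).
  destruct (Bool.bool_dec (c (sel (2 * t))) (c n)) as [E|E].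
  - exists (sel (S (2 * t))); split; [lia|split; [apply Hadj; auto; lia|congruence]].
  - exists (sel (2 * t)); split; [lia|split; [apply Hadj; auto; lia|auto]].
Qed.

Definition nbhd_bound (n : nat) : nat :=
  epsilon (inhabits 0) (fun B => forall m, line_adj n m -> m < B).

Lemma nbhd_bound_spec n : finite_deg_edge n -> forall m, line_adj n m -> m < nbhd_bound n.
Proof.
  intros Hn; apply (epsilon_spec (inhabits 0) (fun B => forall m, line_adj n m -> m < B)).
  apply line_adj_bounded, Hn.
Qed.

Definition stage_ok (k : nat) (c : nat -> bool) : Prop :=
  (finite_deg_edge k -> same line_adj (nbhd_bound k) c k <= opp line_adj (nbhd_bound k) c k) /\
  (infinite_deg (target k) -> c (sel (S (2 * k))) <> c (sel (2 * k))).

Definition stage_support (k : nat) : nat := nbhd_bound k + S k + S (sel (S (2 * k))).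

Lemma stage_ok_local k c c' :
  (forall i, i < stage_support k -> c i = c' i) -> stage_ok k c -> stage_ok k c'.
Proof.
  unfold stage_support; intros Hagree [Hfin Halt].
  pose proof (pick_seq_succ (fun k => incident (target (Nat.div2 k))) (2 * k)); fold sel in *.
  assert (Hk : c k = c' k) by (apply Hagree; lia).
  split.
  - intros Hn; unfold same, opp.
    rewrite (count_ext _ (fun m => line_adj k m /\ c' m = c' k) (fun m => line_adj k m /\ c m = c k)),
      (count_ext _ (fun m => line_adj k m /\ c' m <> c' k) (fun m => line_adj k m /\ c m <> c k));
      [auto| |]; intros m Hm; rewrite Hk, (Hagree m) by lia; tauto.
  - intros Ht; rewrite <- !Hagree by lia; auto.
Qed.

Lemma stage_ok_finitely_satisfiable K : exists c, forall k, k < K -> stage_ok k c.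
Proof.
  destruct (finite_majority (sum K stage_support)) as [c [Halt Hmaj]].
  exists c; intros k Hk; split; [|apply Halt].
  intros Hfin; pose proof (sum_ge_term K stage_support k Hk) as Hsupp.
  unfold stage_support at 1 in Hsupp.
  unfold same, opp.
  rewrite <- !(count_stable (nbhd_bound k) (sum K stage_support))
    by (lia || (intros m [Hm _]; apply nbhd_bound_spec; auto)).
  apply Hmaj; auto; lia.
Qed.

Theorem line_graph_majority_colouring : exists c : nat -> bool, forall n,
  card_le (fun m => line_adj n m /\ c m = c n) (fun m => line_adj n m /\ c m <> c n).
Proof.
  destruct (bool_seq_compactness stage_ok stage_support stage_ok_local
              stage_ok_finitely_satisfiable) as [c Hc].
  exists c; intros n.
  destruct (classic (finite_deg_edge n)) as [Hn|Hn].
  - apply (card_le_of_count (nbhd_bound n)); [|apply (Hc n), Hn].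
    intros m [Hm _]; apply nbhd_bound_spec; auto.
  - apply card_le_of_unbounded.
    apply not_and_or in Hn as [Hx|Hx]; apply NNPP in Hx;
      [apply (opp_unbounded c n (fst (en n)))|apply (opp_unbounded c n (snd (en n)))];
      auto; intros t; apply (Hc t).
Qed.

End LineGraph.

Theorem mainTheorem5 (V : Type) (adj : V -> V -> Prop) :
  simple_graph adj -> countably_infinite V -> is_line_graph adj ->
  exists c : V -> bool, majority_2_colouring adj c.
Proof.
  (* Only the description of [adj] through [ends] is used, so H may be any multigraph. *)
  intros _ [f [finj fsurj]] [W [_ [ends [_ [_ [_ [_ Hadj]]]]]]].
  set (en := fun n => ends (f n)).
  destruct (line_graph_majority_colouring W en) as [c Hc].
  destruct (choice _ fsurj) as [g Hg].
  assert (Hgf : forall n, g (f n) = n) by (intros n; apply finj, Hg).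
  assert (Hline : forall v n, adj v (f n) <-> line_adj W en (g v) n).
  { intros v n; rewrite <- (Hg v) at 1; rewrite Hadj; unfold line_adj, en.
    split; intros [Hne Hs]; split; auto. }
  exists (fun v => c (g v)); intros v.
  apply (card_le_transport f); auto.
  apply (card_le_mono (fun n => line_adj W en (g v) n /\ c n = c (g v))
                      (fun n => line_adj W en (g v) n /\ c n <> c (g v))); [| |apply Hc];
    unfold nbhd; intros n [Hvn Hcn]; rewrite Hgf in *; split; auto; apply Hline; auto.
Qed.
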